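(* Let $\ell$ be a log-scale on a set $X$, and let $(x_n)$ and $(y_n)$ be Cauchy sequences with respect to $\ell$ that are not equivalent. Then there exists a constant $\Delta>0$ such that any two partial limits of the sequence $\ell(x_n,y_n)$ differ from each other by at most $\Delta$.
   Context: A log-scale on a set $X$ is a function $\ell:X\times X\to\mathbb{R}\cup\{\infty\}$ such that $\ell(x,y)=\ell(y,x)$, $\ell(x,y)=+\infty$ iff $x=y$, and for some $\delta\ge0$, $\ell(x,z)\ge\min(\ell(x,y),\ell(y,z))-\delta$ for all $x,y,z$. A sequence $(x_n)$ is Cauchy (with respect to $\ell$) if $\ell(x_n,x_m)\to\infty$ as $n,m\to\infty$. Two Cauchy sequences $(x_n),(y_n)$ are equivalent if $\ell(x_n,y_n)\to\infty$. *)

From HB Require Import structures.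
From mathcomp Require Import all_boot all_order all_algebra.
From mathcomp Require Import all_classical all_reals all_analysis.
Set Implicit Arguments. Unset Strict Implicit. Unset Printing Implicit Defensive.
Import Order.TTheory GRing.Theory Num.Theory.
Local Open Scope ring_scope.
Local Open Scope classical_set_scope.
Local Open Scope ereal_scope.

Definition log_scale (R : realType) (X : Type) (l : X -> X -> \bar R) : Prop :=
  [/\ (forall x y, l x y != -oo),
      (forall x y, l x y = l y x),
      (forall x y, l x y = +oo <-> x = y) &
      exists delta : R, (0 <= delta)%R /\
        forall x y z, Order.min (l x y) (l y z) - delta%:E <= l x z].

Definition ls_cauchy (R : realType) (X : Type) (l : X -> X -> \bar R)
    (x : nat -> X) : Prop :=
  forall M : R, exists N : nat, forall n m : nat,
    (N <= n)%N -> (N <= m)%N -> M%:E <= l (x n) (x m).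

Definition ls_equiv (R : realType) (X : Type) (l : X -> X -> \bar R)
    (x y : nat -> X) : Prop :=
  forall M : R, exists N : nat, forall n : nat, (N <= n)%N -> M%:E <= l (x n) (y n).

Definition partial_limit (R : realType) (u : nat -> \bar R) (L : \bar R) : Prop :=
  exists phi : nat -> nat, {homo phi : n m / (n < m)%N} /\
    (fun n => u (phi n)) @ \oo --> L.

From HB Require Import structures.
From mathcomp Require Import all_boot all_order all_algebra.
From mathcomp Require Import all_classical all_reals all_analysis.
From mathcomp Require Import lra.
Set Implicit Arguments.
Unset Strict Implicit.
Import Order.TTheory GRing.Theory Num.Theory.
Local Open Scope ring_scope.
Local Open Scope classical_set_scope.
Local Open Scope ereal_scope.

(* Chaining the delta-triangle inequality along x_m, x_n, y_n, y_m shows that,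
   once both sequences are c-close to themselves, l(x_n, y_n) can only drop by
   2 delta when n is replaced by m, as long as it stays below c.  Taking c
   above a value M that l(x_n, y_n) undercuts infinitely often (non-equivalence)
   also prevents l(x_m, y_m) from exceeding c.  So the tail of l(x_n, y_n)
   oscillates by at most 2 delta, and so do its partial limits. *)

Lemma homo_ltn_infl (f : nat -> nat) :
  {homo f : n m / (n < m)%N} -> forall n, (n <= f n)%N.
Proof.
by move=> f_incr; elim=> // n le_n_fn; apply: leq_ltn_trans le_n_fn (f_incr _ _ _).
Qed.

Lemma partial_limit_le_shift (R : realType) (u : nat -> \bar R) (D : R) (N : nat)
    (L1 L2 : \bar R) :
  (forall n m, (N <= n)%N -> (N <= m)%N -> u n <= u m + D%:E) ->
  partial_limit u L1 -> partial_limit u L2 -> L1 <= L2 + D%:E.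
Proof.
move=> u_osc [phi [phi_incr u_phi]] [psi [psi_incr u_psi]].
apply: (cvge_to_le u_phi); exists N => // k /= Nk; rewrite -leeBlDr //.
apply: (cvge_to_ge u_psi); exists N => // j /= Nj; rewrite EFinN leeBlDr //.
by apply: u_osc; [apply: leq_trans Nk _ | apply: leq_trans Nj _]; apply: homo_ltn_infl.
Qed.

Lemma not_ls_equiv_frequently_lt (R : realType) (X : Type) (l : X -> X -> \bar R)
    (x y : nat -> X) :
  ~ ls_equiv l x y ->
  exists M : R, forall N, exists2 n, (N <= n)%N & l (x n) (y n) < M%:E.
Proof.
move=> not_equiv; apply: contrapT => never_below; apply: not_equiv => M.
apply: contrapT => not_tail; apply: never_below; exists M => N.
apply: contrapT => no_n; apply: not_tail; exists N => n Nn.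
by rewrite leNgt; apply/negP => lt_u; apply: no_n; exists n.
Qed.

Section LogScaleChains.
Variables (R : realType) (X : Type) (l : X -> X -> \bar R) (d : R).
Hypothesis d_ge0 : (0 <= d)%R.
Hypothesis l_tri : forall a b e, Order.min (l a b) (l b e) - d%:E <= l a e.

Lemma log_scale_chain3 {c : R} {a b e f : X} :
  c%:E <= l a b -> c%:E <= l b e -> c%:E <= l e f -> (c - 2 * d)%:E <= l a f.
Proof.
move=> cab cbe cef.
have cbf : (c - d)%:E <= l b f.
  by apply: le_trans (l_tri b e f); rewrite EFinB leeB // le_min cbe.
apply: le_trans (l_tri a b f); rewrite (_ : c - 2 * d = c - d - d)%R; last lra.
rewrite EFinB leeB // le_min cbf andbT; apply: le_trans cab; by rewrite lee_fin gerBl.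
Qed.

Variables (x y : nat -> X) (c : R) (N : nat).
Hypothesis x_close : forall {n m}, (N <= n)%N -> (N <= m)%N -> c%:E <= l (x n) (x m).
Hypothesis y_close : forall {n m}, (N <= n)%N -> (N <= m)%N -> c%:E <= l (y n) (y m).

Lemma log_scale_diag_transfer {n m : nat} {r : R} :
  (N <= n)%N -> (N <= m)%N -> (r <= c)%R -> r%:E <= l (x n) (y n) ->
  (r - 2 * d)%:E <= l (x m) (y m).
Proof.
move=> Nn Nm rc r_le; apply: log_scale_chain3 _ r_le _.
- by apply: le_trans (x_close Nm Nn); rewrite lee_fin.
- by apply: le_trans (y_close Nn Nm); rewrite lee_fin.
Qed.

Lemma log_scale_diag_ub {n m : nat} :
  (N <= n)%N -> (N <= m)%N -> l (x n) (y n) < (c - 2 * d)%:E ->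
  l (x m) (y m) <= c%:E.
Proof.
move=> Nn Nm u_n_lt; rewrite leNgt; apply/negP => /ltW c_le.
have := log_scale_diag_transfer Nm Nn (lexx c) c_le.
by rewrite leNgt u_n_lt.
Qed.

Lemma log_scale_diag_osc {n m : nat} :
  (N <= n)%N -> (N <= m)%N -> l (x n) (y n) != -oo -> l (x n) (y n) <= c%:E ->
  l (x n) (y n) <= l (x m) (y m) + (2 * d)%:E.
Proof.
move=> Nn Nm; case u_n: (l (x n) (y n)) => [r| |] // _; rewrite lee_fin => rc.
by rewrite -leeBlDr // -EFinB; apply: log_scale_diag_transfer Nn Nm rc _; rewrite u_n.
Qed.

End LogScaleChains.

Lemma ls_cauchy_common_tail (R : realType) (X : Type) (l : X -> X -> \bar R)
    (x y : nat -> X) (c : R) :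
  ls_cauchy l x -> ls_cauchy l y ->
  exists N, (forall n m, (N <= n)%N -> (N <= m)%N -> c%:E <= l (x n) (x m)) /\
            (forall n m, (N <= n)%N -> (N <= m)%N -> c%:E <= l (y n) (y m)).
Proof.
move=> /(_ c) [Nx x_close] /(_ c) [Ny y_close]; exists (maxn Nx Ny).
by split=> n m; rewrite !geq_max => /andP[? ?] /andP[? ?]; [apply: x_close | apply: y_close].
Qed.

Theorem proposition1p1p9 (R : realType) (X : Type) (l : X -> X -> \bar R)
    (x y : nat -> X) :
  log_scale l -> ls_cauchy l x -> ls_cauchy l y -> ~ ls_equiv l x y ->
  exists Delta : R, (0 < Delta)%R /\
    forall L1 L2 : \bar R,
      partial_limit (fun n => l (x n) (y n)) L1 ->
      partial_limit (fun n => l (x n) (y n)) L2 ->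
      L1 <= L2 + Delta%:E /\ L2 <= L1 + Delta%:E.
Proof.
case=> l_fin _ _ [d [d_ge0 l_tri]] x_cauchy y_cauchy not_equiv.
have [M u_frequently_lt] := not_ls_equiv_frequently_lt not_equiv.
have [N [x_close y_close]] := ls_cauchy_common_tail (M + 2 * d) x_cauchy y_cauchy.
have u_ub m : (N <= m)%N -> l (x m) (y m) <= (M + 2 * d)%:E.
  have [n Nn u_n_lt] := u_frequently_lt N.
  move=> Nm; have := log_scale_diag_ub d_ge0 l_tri x_close y_close Nn Nm.
  by rewrite addrK; apply.
have u_osc n m : (N <= n)%N -> (N <= m)%N ->
    l (x n) (y n) <= l (x m) (y m) + (2 * d)%:E.
  move=> Nn Nm.
  by move: (log_scale_diag_osc d_ge0 l_tri x_close y_close Nn Nm (l_fin _ _) (u_ub n Nn)).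
have widen a b : a <= b + (2 * d)%:E -> a <= b + (2 * d + 1)%:E.
  by move=> /le_trans; apply; rewrite leeD2l // lee_fin lerDl.
exists (2 * d + 1)%R; split; first lra.
by move=> L1 L2 L1_lim L2_lim; split; apply: widen; exact: partial_limit_le_shift u_osc _ _.
Qed.
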